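(* Let $H \subset L$ be light-cone regular. Then its initial boundary satisfies $H_0 = \{ h \in H \mid h + v_N \notin H \}$.
   Context: Let $L$ be a finitely generated $\mathbb{Z}$-module and $v_1,\dots,v_N\in L$ distinct elements, linearly independent over $\mathbb{Z}_{\ge 0}$ (i.e. $\sum_i a_i v_i=0$ with all $a_i\in\mathbb{Z}_{\ge0}$ forces all $a_i=0$). Let $S=\{\sum_i a_iv_i : a_i\in\mathbb{Z}_{\ge0}\}$ and define the partial order $h_1\le h_2$ iff $h_1-h_2\in S$. Assume $v_N$ is the minimum of $\{0,v_1,\dots,v_N\}$ with respect to $\le$ (this is part of the standing invertibility assumption on the equation $f_h=\Phi(f_{h+v_1},\dots,f_{h+v_N})$). A nonempty subset $H\subset L$ is light-cone regular if for every $h\in H$ the set $\{h'\in H: h'\le h\}$ is finite and $\{h'\in L: h'\ge h\}\subset H$. Its initial boundary is $H_0=\{h\in H:\ h+v_i\notin H\text{ for some }i\}$. *)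

From mathcomp Require Import all_boot all_algebra.
Set Implicit Arguments. Unset Strict Implicit. Unset Printing Implicit Defensive.
Import GRing.Theory.
Local Open Scope ring_scope.

Definition fin_gen_zmod (L : zmodType) : Prop :=
  exists gs : seq L, forall x : L,
    exists c : 'I_(size gs) -> int, x = \sum_(i < size gs) gs`_i *~ c i.

(* The vectors v_1..v_N are indexed by 'I_n.+1 (so N = n.+1 >= 1);
   v_N is  v ord_max. *)

Definition nonneg_indep (L : zmodType) (n : nat) (v : 'I_n.+1 -> L) : Prop :=
  forall a : 'I_n.+1 -> nat, \sum_i v i *+ a i = 0 -> forall i, a i = 0%N.

Definition inS (L : zmodType) (n : nat) (v : 'I_n.+1 -> L) (x : L) : Prop :=
  exists a : 'I_n.+1 -> nat, x = \sum_i v i *+ a i.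

Definition vle (L : zmodType) (n : nat) (v : 'I_n.+1 -> L) (h1 h2 : L) : Prop :=
  inS v (h1 - h2).

Definition finite_set (T : eqType) (P : T -> Prop) : Prop :=
  exists s : seq T, forall x, P x -> x \in s.

Definition light_cone_regular (L : zmodType) (n : nat) (v : 'I_n.+1 -> L)
    (H : L -> Prop) : Prop :=
  (exists h, H h) /\
  forall h, H h ->
    finite_set (fun h' => H h' /\ vle v h' h) /\
    (forall h', vle v h h' -> H h').

Definition initial_boundary (L : zmodType) (n : nat) (v : 'I_n.+1 -> L)
    (H : L -> Prop) (h : L) : Prop :=
  H h /\ exists i, ~ H (h + v i).

From mathcomp Require Import all_boot all_algebra.
Local Open Scope ring_scope.
Import GRing.Theory.
Set Implicit Arguments. Unset Strict Implicit.

(* If h + v_i leaves H for some i, then so does h + v_N: since v_N <= v_i and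
   the order is translation invariant, h + v_i lies above h + v_N, and H is
   closed upwards. *)

Lemma vle_add2l (L : zmodType) (n : nat) (v : 'I_n.+1 -> L) (h x y : L) :
  vle v (h + x) (h + y) = vle v x y.
Proof. by rewrite /vle [h + x]addrC addrKA. Qed.

Lemma light_cone_regular_vle (L : zmodType) (n : nat) (v : 'I_n.+1 -> L)
    (H : L -> Prop) (h h' : L) :
  light_cone_regular v H -> H h -> vle v h h' -> H h'.
Proof. by move=> [_ regH] /regH[_]; apply. Qed.

Lemma light_cone_regular_shift (L : zmodType) (n : nat) (v : 'I_n.+1 -> L)
    (H : L -> Prop) (j : 'I_n.+1) (h : L) :
  light_cone_regular v H -> (forall i, vle v (v j) (v i)) ->
  H (h + v j) -> forall i, H (h + v i).
Proof.
move=> regH minj Hhj i; apply: light_cone_regular_vle regH Hhj _.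
by rewrite vle_add2l.
Qed.

Theorem lemma3p1 (L : zmodType) (n : nat) (v : 'I_n.+1 -> L)
  (H : L -> Prop) :
  fin_gen_zmod L ->
  injective v ->
  nonneg_indep v ->
  (vle v (v ord_max) 0 /\ forall i, vle v (v ord_max) (v i)) ->
  light_cone_regular v H ->
  forall h, initial_boundary v H h <-> (H h /\ ~ H (h + v ord_max)).
Proof.
move=> _ _ _ [_ min_vN] regH h; split.
- move=> [Hh [i Hhi]]; split=> // HhN.
  exact: Hhi (light_cone_regular_shift regH min_vN HhN i).
- by move=> [Hh HhN]; split=> //; exists ord_max.
Qed.
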